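(* Let $h$ be a positive integer, let $S$ be an arbitrary set of positive integers, and let $S'=\mathbb{N}_+\setminus\{mh\mid m\in\mathbb{N}_+\setminus S\}$. Then for every integer $n\ge 0$, $$G_{S'}(n)=G_S\left(\left\lfloor\frac{n}{h}\right\rfloor\right)h+(n\bmod h).$$
   Context: $\mathbb{N}_+$ denotes the set of positive integers. For a finite set $T$ of non-negative integers, $\mathrm{mex}\,T$ is the least non-negative integer not in $T$. For a set $S$ of positive integers, $\mathrm{Subtraction}(S)$ is the impartial normal-play game on a single heap, where a move takes a heap of $x$ tokens to a heap of $x-s$ tokens for some $s\in S$ with $s\le x$. Its $\mathcal{G}$-value sequence $G_S$ is defined recursively by $G_S(x)=\mathrm{mex}\{G_S(x-s)\mid s\in S,\ s\le x\}$ for $x=0,1,2,\ldots$. *)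

From Stdlib Require Import Arith Lia Wf_nat ClassicalEpsilon.

(* Chosen by classical epsilon; when T is finite (as for
   all uses below) such a least element exists and is unique. *)
Definition mex (T : nat -> Prop) : nat :=
  epsilon (inhabits 0) (fun m => ~ T m /\ forall k, k < m -> T k).

Definition G_step (S : nat -> Prop) (x : nat) (g : forall y, y < x -> nat) : nat :=
  mex (fun v => exists s (H : 0 < s <= x), S s /\
                  v = g (x - s) (ltac:(lia))).

Definition G (S : nat -> Prop) : nat -> nat :=
  Fix lt_wf (fun _ => nat) (G_step S).

(* Write n = q h + r with r < h.  The map n |-> G_S(q) h + r satisfies the
   defining mex recursion of Subtraction(S'): a move of S' either changes the
   remainder r (any s that is not a multiple of h is allowed), which reaches
   every value G_S(q') h + r' with r' <> r below, or keeps r, in which case it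
   is a move m h with m in S and acts on the quotient exactly as a move of
   Subtraction(S).  Since the recursion has a unique solution, the map is G_S'. *)

From Stdlib Require Import Arith.
From Stdlib Require Import Lia Wf_nat ClassicalEpsilon Classical FunctionalExtensionality PropExtensionality.

Lemma mex_eq (P : nat -> Prop) (m : nat) :
  ~ P m -> (forall k, k < m -> P k) -> mex P = m.
Proof.
  intros Hm Hbelow. unfold mex.
  destruct (epsilon_spec (inhabits 0) (fun m => ~ P m /\ forall k, k < m -> P k)
              (ex_intro _ m (conj Hm Hbelow))) as [He Hebelow].
  set (e := epsilon _ _) in *.
  destruct (lt_eq_lt_dec e m) as [[Hlt | Heq] | Hgt]; auto.
  - exfalso; apply He, Hbelow, Hlt.
  - exfalso; apply Hm, Hebelow, Hgt.
Qed.

Lemma least_nonmember_exists (P : nat -> Prop) (m : nat) :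
  ~ P m -> exists m', ~ P m' /\ forall k, k < m' -> P k.
Proof.
  induction m as [m IH] using (well_founded_induction lt_wf). intros Hm.
  destruct (classic (forall k, k < m -> P k)) as [Hbelow | Hbelow]; eauto.
  apply not_all_ex_not in Hbelow as [k Hk].
  apply imply_to_and in Hk as [Hkm HPk]. eapply IH; eauto.
Qed.

Lemma mex_spec (P : nat -> Prop) :
  (exists m, ~ P m) -> ~ P (mex P) /\ forall k, k < mex P -> P k.
Proof.
  intros [m Hm]. destruct (least_nonmember_exists P m Hm) as [m' [Hm' Hbelow]].
  rewrite (mex_eq P m' Hm' Hbelow). auto.
Qed.

Lemma mex_le (P : nat -> Prop) (m : nat) : ~ P m -> mex P <= m.
Proof.
  intros Hm. destruct (mex_spec P (ex_intro _ m Hm)) as [_ Hbelow].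
  destruct (le_lt_dec (mex P) m) as [Hle | Hlt]; [exact Hle |].
  exfalso. apply Hm, Hbelow, Hlt.
Qed.

Lemma mex_ext (P Q : nat -> Prop) : (forall v, P v <-> Q v) -> mex P = mex Q.
Proof.
  intros HPQ. f_equal. apply functional_extensionality; intro v.
  apply propositional_extensionality, HPQ.
Qed.

Definition option_value (S : nat -> Prop) (f : nat -> nat) (x v : nat) : Prop :=
  exists s, 0 < s <= x /\ S s /\ v = f (x - s).

Lemma G_unfold (S : nat -> Prop) (x : nat) : G S x = mex (option_value S (G S) x).
Proof.
  unfold G at 1. rewrite Fix_eq.
  - apply mex_ext; intro v. unfold option_value. split.
    + intros [s [Hs [HSs Hv]]]. eauto.
    + intros [s [Hs [HSs Hv]]]. exists s, Hs. auto.
  - intros y f g Hfg. apply mex_ext; intro v.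
    split; intros [s [Hs [HSs Hv]]]; exists s, Hs; rewrite Hv, Hfg; auto.
Qed.

Lemma G_unique (S : nat -> Prop) (f : nat -> nat) :
  (forall x, f x = mex (option_value S f x)) -> forall n, G S n = f n.
Proof.
  intros Hf n. induction n as [n IH] using (well_founded_induction lt_wf).
  rewrite G_unfold, Hf. apply mex_ext; intro v. unfold option_value.
  split; intros [s [Hs [HSs Hv]]]; exists s; rewrite IH in * by lia; auto.
Qed.

Lemma G_le (S : nat -> Prop) (x : nat) : G S x <= x.
Proof.
  induction x as [x IH] using (well_founded_induction lt_wf).
  rewrite G_unfold. apply mex_le.
  intros [s [Hs [_ Hv]]]. specialize (IH (x - s)). lia.
Qed.

Lemma G_spec (S : nat -> Prop) (x : nat) :
  ~ option_value S (G S) x (G S x) /\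
  forall k, k < G S x -> option_value S (G S) x k.
Proof.
  rewrite (G_unfold S x). apply mex_spec.
  exists x. intros [s [Hs [_ Hv]]]. pose proof (G_le S (x - s)). lia.
Qed.

Lemma divmod_exists (h n : nat) : 0 < h -> exists q r, r < h /\ n = q * h + r.
Proof.
  intros Hh. exists (n / h), (n mod h). split.
  - apply Nat.mod_upper_bound. lia.
  - pose proof (Nat.div_mod_eq n h). lia.
Qed.

Lemma divmod_unique (h a b c d : nat) :
  b < h -> d < h -> a * h + b = c * h + d -> a = c /\ b = d.
Proof.
  intros Hb Hd E. apply (Nat.div_mod_unique h); lia.
Qed.

Definition stretch (h : nat) (S : nat -> Prop) (s : nat) : Prop :=
  0 < s /\ ~ (exists m, 0 < m /\ ~ S m /\ s = m * h).

Lemma stretch_intro (h : nat) (S : nat -> Prop) (s : nat) :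
  0 < s -> (forall m, 0 < m -> s = m * h -> S m) -> stretch h S s.
Proof.
  intros Hs HS. split; [exact Hs |].
  intros [m [Hm [HnS Es]]]. exact (HnS (HS m Hm Es)).
Qed.

Lemma stretch_multiple (h : nat) (S : nat -> Prop) (m : nat) :
  0 < m -> stretch h S (m * h) -> S m.
Proof.
  intros Hm [_ Hnot]. apply NNPP. intros HnS. apply Hnot. eauto.
Qed.

Section Stretch.

Variable h : nat.
Hypothesis h_pos : 0 < h.
Variable S : nat -> Prop.

Let F (n : nat) : nat := G S (n / h) * h + n mod h.

Lemma F_divmod (q r : nat) : r < h -> F (q * h + r) = G S q * h + r.
Proof.
  intros Hr. unfold F.
  rewrite <- (Nat.div_unique (q * h + r) h q r), <- (Nat.mod_unique (q * h + r) h q r);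
    auto; lia.
Qed.

(* The move from q h + r to c h + b is legal in Subtraction(stretch h S)
   unless it is m h for the one m = q - c, which b = r forces. *)
Lemma stretch_option (q r c b : nat) :
  r < h -> b < h -> c * h + b < q * h + r ->
  (forall m, 0 < m -> c + m = q -> S m) ->
  option_value (stretch h S) F (q * h + r) (G S c * h + b).
Proof.
  intros Hr Hb Hlt HS. exists (q * h + r - (c * h + b)). split; [lia |]. split.
  - apply stretch_intro; [lia |]. intros m Hm Es.
    destruct (divmod_unique h q r (c + m) b) as [Eq _]; [auto | auto | nia |].
    apply HS; lia.
  - rewrite <- F_divmod by exact Hb. f_equal. lia.
Qed.

Lemma F_not_option (n : nat) : ~ option_value (stretch h S) F n (F n).
Proof.
  destruct (divmod_exists h n h_pos) as [q [r [Hr ->]]].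
  intros [s [Hs [HSs Hv]]].
  destruct (divmod_exists h (q * h + r - s) h_pos) as [q' [r' [Hr' Hn']]].
  rewrite Hn', !F_divmod in Hv by assumption.
  destruct (divmod_unique h _ _ _ _ Hr Hr' Hv) as [Eq <-].
  assert (Hq' : q' < q) by nia.
  assert (HS : S (q - q')).
  { apply (stretch_multiple h); [lia |].
    replace ((q - q') * h) with s by nia. exact HSs. }
  apply (proj1 (G_spec S q)). exists (q - q'). split; [lia |]. split; [exact HS |].
  replace (q - (q - q')) with q' by lia. exact Eq.
Qed.

Lemma F_options_below (n k : nat) : k < F n -> option_value (stretch h S) F n k.
Proof.
  destruct (divmod_exists h n h_pos) as [q [r [Hr ->]]].
  destruct (divmod_exists h k h_pos) as [a [b [Hb ->]]].
  rewrite F_divmod by exact Hr. intros Hk.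
  destruct (lt_eq_lt_dec a (G S q)) as [[Hlt | ->] | Hgt].
  - destruct (proj2 (G_spec S q) a Hlt) as [m [Hm [HSm ->]]].
    apply stretch_option; [auto | auto | nia |].
    intros m' Hm' Em. replace m' with m by lia. exact HSm.
  - apply stretch_option; [auto | auto | lia | lia].
  - nia.
Qed.

Lemma F_mex (n : nat) : F n = mex (option_value (stretch h S) F n).
Proof.
  symmetry. apply mex_eq; [apply F_not_option | apply F_options_below].
Qed.

Lemma G_stretch (n : nat) : G (stretch h S) n = G S (n / h) * h + n mod h.
Proof. exact (G_unique (stretch h S) F F_mex n). Qed.

End Stretch.

Theorem theorem2p2 (h : nat) (S : nat -> Prop) :
  0 < h ->
  (forall s, S s -> 0 < s) ->
  forall n : nat,
    G (fun s => 0 < s /\ ~ (exists m, 0 < m /\ ~ S m /\ s = m * h)) n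
    = G S (n / h) * h + n mod h.
Proof.
  intros Hh _ n. exact (G_stretch h Hh S n).
Qed.
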